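(* Let $M$ be a $3$-connected matroid with $r(M)\ge 4$, and let $C^*$ and $D^*$ be distinct cocircuits of $M$. Then $r_M(C^*\cup D^* )\ge 4$. *)

From mathcomp Require Import all_boot.
Set Implicit Arguments. Unset Strict Implicit. Unset Printing Implicit Defensive.

(* A matroid whose ground set is the whole finite type E, given by its
   independent sets (Oxley's axioms (I1)-(I3)). *)
Record matroid (E : finType) := Matroid {
  indep : {set E} -> bool;
  indep0 : indep set0;
  indep_sub : forall A B : {set E}, B \subset A -> indep A -> indep B;
  indep_aug : forall A B : {set E}, indep A -> indep B -> #|A| < #|B| ->
                exists2 x, x \in B :\: A & indep (x |: A)
}.

Section MatroidDefs.
Variables (E : finType) (M : matroid E).

Definition rk (X : {set E}) : nat :=
  \max_(Y : {set E} | (Y \subset X) && indep M Y) #|Y|.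

Definition rank_matroid : nat := rk setT.

Definition is_basis (B : {set E}) : Prop :=
  indep M B /\ forall Y : {set E}, indep M Y -> B \subset Y -> Y = B.

(* C is dependent in the dual matroid M^* iff it is not contained in the
   complement of any basis, i.e. it meets every basis. *)
Definition meets_all_bases (C : {set E}) : Prop :=
  forall B, is_basis B -> ~~ [disjoint B & C].

(* cocircuit = circuit of M^* = minimal dependent set of M^* *)
Definition cocircuit (C : {set E}) : Prop :=
  meets_all_bases C /\ forall D : {set E}, D \proper C -> ~ meets_all_bases D.

(* Tutte connectivity: a k-separation is a partition (X, E - X) with
   |X|, |E - X| >= k and r(X) + r(E - X) - r(M) < k. *)
Definition k_separation (k : nat) (X : {set E}) : Prop :=
  k <= #|X| /\ k <= #|~: X| /\ rk X + rk (~: X) < rank_matroid + k.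

Definition n_connected (n : nat) : Prop :=
  forall k, 1 <= k -> k < n -> forall X : {set E}, ~ k_separation k X.

Definition three_connected : Prop := n_connected 3.

End MatroidDefs.

(* The complement Y of X := C* ∪ D* has rank at most r(M) - 2: an independent
   subset of Y of size r(M) - 1 could be extended, by an element of a basis
   avoiding the proper subset C* ∩ D* of C*, to a basis; that basis must meet
   both C* and D*, hence contain an element of C* ∩ D*, which is impossible.
   If r(X) <= 3, then r(X) + r(Y) <= r(M) + 1, so (X, Y) is a 2-separation when
   |Y| >= 2 and a 1-separation when |Y| = 1 (as r(M) >= 4); Y = ∅ would give
   r(X) = r(M) >= 4. *)

From Stdlib Require Import Classical.
From mathcomp Require Import all_boot.
From mathcomp Require Import zify.
Set Implicit Arguments. Unset Strict Implicit. Unset Printing Implicit Defensive.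

Lemma card_setU_gt1 (T : finType) (A B : {set T}) :
  ~~ (A \subset B) -> ~~ (B \subset A) -> 1 < #|A :|: B|.
Proof.
rewrite -!setD_eq0 => /set0Pn[a /setDP[aA aB]] /set0Pn[b /setDP[bB bA]].
apply/card_gt1P; exists a, b; rewrite !inE aA bB orbT; split => //.
by apply: contraNneq bA => <-.
Qed.

Section Rank.
Variables (E : finType) (M : matroid E).

Lemma indep_card_le_rk (X I : {set E}) : I \subset X -> indep M I -> #|I| <= rk M X.
Proof. by move=> sIX iI; apply: (leq_bigmax_cond I); rewrite sIX iI. Qed.

Lemma rk_le_card (X : {set E}) : rk M X <= #|X|.
Proof. by apply/bigmax_leqP => I /andP[sIX _]; apply: subset_leq_card. Qed.

Lemma rk_witness (X : {set E}) :
  exists2 I : {set E}, (I \subset X) && indep M I & rk M X = #|I|.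
Proof.
have nonempty : 0 < #|[pred Y : {set E} | (Y \subset X) && indep M Y]|.
  by apply/card_gt0P; exists set0; rewrite inE sub0set indep0.
have [I hI eI] := eq_bigmax_cond (fun Y : {set E} => #|Y|) nonempty.
by exists I; [move: hI; rewrite inE | rewrite /rk eI].
Qed.

Lemma basis_card (B : {set E}) : is_basis M B -> #|B| = rank_matroid M.
Proof.
move=> [iB maxB]; apply/eqP; rewrite eqn_leq indep_card_le_rk ?subsetT //=.
rewrite /rank_matroid; have [A /andP[_ iA] ->] := rk_witness setT.
rewrite leqNgt; apply/negP => ltBA.
have [x /setDP[_ xNB] ixB] := indep_aug iB iA ltBA.
by move: xNB; rewrite -(maxB _ ixB (subsetUr _ _)) setU11.
Qed.

Lemma indep_rank_basis (B : {set E}) :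
  indep M B -> rank_matroid M <= #|B| -> is_basis M B.
Proof.
move=> iB rB; split=> // Y iY sBY; apply/esym/eqP; rewrite eqEcard sBY /=.
exact: leq_trans (indep_card_le_rk (subsetT Y) iY) rB.
Qed.

Lemma n_connected_rk_sum n k (X : {set E}) :
  n_connected M n -> 1 <= k -> k < n -> k <= #|X| -> k <= #|~: X| ->
  rank_matroid M + k <= rk M X + rk M (~: X).
Proof.
move=> conn k1 kn kX kY; rewrite leqNgt; apply/negP => sep.
exact: (conn k k1 kn X).
Qed.

End Rank.

Section Cocircuits.
Variables (E : finType) (M : matroid E) (Cs Ds : {set E}).
Hypotheses (cocircC : cocircuit M Cs) (cocircD : cocircuit M Ds) (neqCD : Cs != Ds).

Lemma cocircuit_not_subset : ~~ (Cs \subset Ds).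
Proof.
apply/negP => sCD; apply: cocircD.2 cocircC.1.
by rewrite properEneq neqCD sCD.
Qed.

Lemma cocircuitI_not_meets_all_bases : ~ meets_all_bases M (Cs :&: Ds).
Proof.
apply: cocircC.2; rewrite properEneq subsetIl andbT.
by apply: contra cocircuit_not_subset => /eqP <-; rewrite subsetIr.
Qed.

Lemma indep_disjoint_cocircuitsU_card (I : {set E}) :
  indep M I -> [disjoint I & Cs :|: Ds] -> #|I|.+2 <= rank_matroid M.
Proof.
move=> iI disI; rewrite leqNgt; apply/negP => bigI.
have notin_I y : y \in Cs :|: Ds -> y \notin I by move=> yCD; rewrite (disjointFl disI).
have [eI | ltI] := eqVneq #|I| (rank_matroid M).
  have basI : is_basis M I by apply: indep_rank_basis; rewrite ?eI.
  by have := cocircC.1 I basI; rewrite (disjointWr (subsetUl Cs Ds) disI).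
have [B notB] := not_all_ex_not _ _ cocircuitI_not_meets_all_bases.
have [basB /negP/negPn disB] := imply_to_and _ _ notB.
have [x /setDP[xB xNI] ixI] : exists2 x, x \in B :\: I & indep M (x |: I).
  apply: (indep_aug iI basB.1); rewrite (basis_card basB) ltn_neqAle ltI.
  exact: indep_card_le_rk (subsetT I) iI.
have basxI : is_basis M (x |: I).
  by apply: indep_rank_basis; rewrite // cardsU1 xNI; lia.
have meets_only_at_x (A : {set E}) : A \subset Cs :|: Ds -> ~~ [disjoint x |: I & A] -> x \in A.
  move=> sA; rewrite -setI_eq0 => /set0Pn[y]; rewrite !inE => /andP[/orP[/eqP-> //|yI] yA].
  by rewrite (negbTE (notin_I y (subsetP sA y yA))) in yI.
have xC := meets_only_at_x _ (subsetUl _ _) (cocircC.1 _ basxI).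
have xD := meets_only_at_x _ (subsetUr _ _) (cocircD.1 _ basxI).
by move: (disjointFr disB xB); rewrite inE xC xD.
Qed.

Lemma rk_setC_cocircuitsU : (rk M (~: (Cs :|: Ds))).+2 <= rank_matroid M.
Proof.
have [I /andP[sIY iI] ->] := rk_witness M (~: (Cs :|: Ds)).
by apply: (indep_disjoint_cocircuitsU_card iI); rewrite subsets_disjoint setCK in sIY.
Qed.

End Cocircuits.

Theorem lemma3p4 (E : finType) (M : matroid E) (Cs Ds : {set E}) :
  three_connected M -> 4 <= rank_matroid M ->
  cocircuit M Cs -> cocircuit M Ds -> Cs != Ds ->
  4 <= rk M (Cs :|: Ds).
Proof.
move=> conn r4 cocircC cocircD neqCD; rewrite leqNgt; apply/negP => rkX3.
have rkY := rk_setC_cocircuitsU cocircC cocircD neqCD.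
set X := Cs :|: Ds in rkX3 rkY *.
have X2 : 1 < #|X|.
  apply: card_setU_gt1; first exact: cocircuit_not_subset cocircC cocircD neqCD.
  by apply: (cocircuit_not_subset cocircD cocircC); rewrite eq_sym.
have Y1 : 0 < #|~: X|.
  rewrite lt0n; apply: contraTneq rkX3 => /cards0_eq Y0.
  by rewrite -(setCK X) Y0 setC0 -leqNgt.
have rkYcard := rk_le_card M (~: X).
have [Yle1 | Y2] := leqP #|~: X| 1.
- have := n_connected_rk_sum (k := 1) conn isT isT (ltnW X2) Y1; lia.
- have := n_connected_rk_sum (k := 2) conn isT isT X2 Y2; lia.
Qed.
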